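(* Let $X=X(\Delta)$ be a smooth projective toric variety. The pseudo-effective cone $\overline{\operatorname{Eff}}(X)\subset\operatorname{Pic}(X)_{\mathbb{R}}$ is simplicial if and only if there exists a maximal cone $\sigma_0\in\Delta$ such that every ray in $\Delta(1)\setminus\sigma_0(1)$ is a linear combination of the rays in $\sigma_0(1)$ with non-positive coefficients.
   Context: Rays are identified with their primitive generators in the lattice $N$; $\sigma(1)$ is the set of rays of a cone $\sigma$. The pseudo-effective cone is the closed cone generated by effective divisor classes (for toric $X$, by the classes of the torus-invariant prime divisors). *)

From HB Require Import structures.
From mathcomp Require Import all_boot all_order all_algebra.
From mathcomp Require Import reals.
Set Implicit Arguments. Unset Strict Implicit. Unset Printing Implicit Defensive.
Import Order.TTheory GRing.Theory Num.Theory.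
Local Open Scope ring_scope.

(* Lattice N = Z^n.  The rays of the fan are indexed by 'I_r; ray i has
   primitive generator  v i : 'I_n -> int.  A cone of the fan is recorded
   by the set of (indices of) its rays, so the fan is Delta : {set {set 'I_r}}
   and sigma(1) = sigma. *)

Section Toric.
Variables (R : realType) (n r : nat) (v : 'I_r -> 'I_n -> int).

Definition in_cone (sigma : {set 'I_r}) (x : 'I_n -> R) : Prop :=
  exists c : 'I_r -> R, (forall i, 0 <= c i) /\
    forall l, x l = \sum_(i in sigma) c i * (v i l)%:~R.

Definition smooth_cone (sigma : {set 'I_r}) : Prop :=
  exists B : 'M[int]_n, B \in unitmx /\
    forall i, i \in sigma -> exists k : 'I_n, forall l, B k l = v i l.

(* Delta is a fan whose set of rays Delta(1) is exactly {v i | i : 'I_r}. *)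
Definition is_fan (Delta : {set {set 'I_r}}) : Prop :=
  [/\ injective v,
      (forall i, [set i] \in Delta),
      (forall sigma tau : {set 'I_r}, sigma \in Delta -> tau \subset sigma -> tau \in Delta),
      (forall sigma : {set 'I_r}, sigma \in Delta ->
         forall c : 'I_r -> R,
           (forall l, \sum_(i in sigma) c i * (v i l)%:~R = 0) ->
           forall i, i \in sigma -> c i = 0)
    & (forall (sigma tau : {set 'I_r}) (x : 'I_n -> R), sigma \in Delta -> tau \in Delta ->
         in_cone sigma x -> in_cone tau x -> in_cone (sigma :&: tau) x)].

Definition smooth_fan (Delta : {set {set 'I_r}}) : Prop :=
  forall sigma : {set 'I_r}, sigma \in Delta -> smooth_cone sigma.

Definition complete_fan (Delta : {set {set 'I_r}}) : Prop :=
  forall x : 'I_n -> R, exists2 sigma, sigma \in Delta & in_cone sigma x.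

Definition maximal_cone (Delta : {set {set 'I_r}}) (sigma : {set 'I_r}) : Prop :=
  sigma \in Delta /\ forall tau : {set 'I_r}, tau \in Delta -> sigma \subset tau -> tau = sigma.

(* X(Delta) is projective: there is a torus-invariant divisor sum_i a_i D_i
   whose support function is strictly convex (i.e. it is ample). *)
Definition projective_fan (Delta : {set {set 'I_r}}) : Prop :=
  exists a : 'I_r -> R, forall sigma : {set 'I_r}, maximal_cone Delta sigma ->
    exists m : 'I_n -> R,
      (forall i, i \in sigma -> \sum_l m l * (v i l)%:~R = - a i) /\
      (forall j, j \notin sigma -> \sum_l m l * (v j l)%:~R > - a j).

(* Pic(X)_R = R^{Delta(1)} / M_R, where m in M_R maps to (<m, v_i>)_i.
   We work with representatives x : 'I_r -> R (the divisor sum_i x_i D_i). *)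
Definition lin_equiv (x y : 'I_r -> R) : Prop :=
  exists m : 'I_n -> R, forall i, x i - y i = \sum_l m l * (v i l)%:~R.

(* Pseudo-effective cone: the (closed) cone generated by the classes [D_i]. *)
Definition pseff (x : 'I_r -> R) : Prop :=
  exists2 c : 'I_r -> R, (forall i, 0 <= c i) & lin_equiv x c.

Definition pseff_simplicial : Prop :=
  exists (k : nat) (w : 'I_k -> 'I_r -> R),
    (forall c : 'I_k -> R,
        lin_equiv (fun i => \sum_j c j * w j i) (fun _ => 0) ->
        forall j, c j = 0) /\
    (forall x, pseff x <->
       exists2 c : 'I_k -> R, (forall j, 0 <= c j) &
         lin_equiv x (fun i => \sum_j c j * w j i)).

End Toric.

From HB Require Import structures.
From mathcomp Require Import all_boot all_order all_algebra.
From mathcomp Require Import reals.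
Import Order.TTheory GRing.Theory Num.Theory.

(* A simplicial cone is generated by its extremal rays, and those of the
   pseudo-effective cone are spanned by classes of prime divisors: writing the
   generators w_l through the D_i and back yields a nonnegative matrix a with a
   nonnegative left inverse, so for each l some row of a is supported exactly
   at l, i.e. some [D_(p l)] is a positive multiple of [w_l].  Hence Eff(X) is
   simplicial exactly when, for some set S of rays, the classes [D_j] with j
   outside S form a basis of Pic(X)_R and every D_i with i in S is linearly
   equivalent to an effective divisor supported outside S.  Dually, there are
   characters m_i (i in S) with <m_i, v_t> = delta_ti on S and <m_i, v_j> <= 0
   outside S; they form the dual basis of the rays of S, so the <m_i, v_j> are
   the coordinates of v_j on these rays.  Completeness forces S to be a maximal
   cone: the point sum_(i in S) v_i lies in some cone tau, and pairing with m_i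
   shows that tau contains every i in S. *)

Set Implicit Arguments.
Unset Strict Implicit.
Unset Printing Implicit Defensive.

Local Open Scope ring_scope.

Lemma imset_enum_val (T : finType) (A : {set T}) :
  [set enum_val l | l : 'I_#|A|] = A.
Proof.
apply/setP => t; apply/imsetP/idP => [[l _ ->] | tA]; first exact: enum_valP.
by exists (enum_rank_in tA t); rewrite ?enum_rankK_in.
Qed.

Section DualFamilies.
Variables (R : fieldType) (I : finType) (n : nat).

Lemma sum_delta (P : pred I) (F : I -> R) i :
  P i -> \sum_(t | P t) F t * (t == i)%:R = F i.
Proof.
move=> Pi; rewrite (bigD1 i) //= eqxx mulr1 big1 ?addr0 // => t /andP[_ /negbTE->].
by rewrite mulr0.
Qed.

Variables (u : I -> 'I_n -> R) (S : {set I}).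

Lemma dual_functional :
  (forall c : I -> R, (forall l, \sum_(i in S) c i * u i l = 0) ->
     forall i, i \in S -> c i = 0) ->
  forall i, i \in S -> exists m : 'I_n -> R,
    forall j, j \in S -> \sum_l m l * u j l = (j == i)%:R.
Proof.
move=> free i iS; pose h := enum_rank_in iS.
pose V : 'M[R]_(#|S|, n) := \matrix_(k, l) u (enum_val k) l.
have /row_freeP [B VB] : row_free V.
  apply: inj_row_free => w wV; apply/rowP => k; rewrite mxE -[k](enum_valK_in iS).
  apply: (free (fun j => w 0 (h j)) _ _ (enum_valP k)) => l.
  transitivity ((w *m V) 0 l); last by rewrite wV mxE.
  rewrite mxE (big_enum_rank iS); apply: eq_bigr => s sS.
  by rewrite mxE (enum_rankK_in iS sS).
exists (fun l => B l (h i)) => j jS.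
transitivity ((V *m B) (h j) (h i)).
  by rewrite mxE; apply: eq_bigr => l _; rewrite mxE (enum_rankK_in iS jS) mulrC.
rewrite VB mxE; congr (_%:R); congr nat_of_bool.
by apply/idP/idP => /eqP => [/(enum_rank_in_inj jS iS) ->|->].
Qed.

Lemma separating_span :
  (forall m : 'I_n -> R, (forall i, i \in S -> \sum_l m l * u i l = 0) ->
     forall l, m l = 0) ->
  forall x : 'I_n -> R, exists d : I -> R,
    forall l, x l = \sum_(i in S) d i * u i l.
Proof.
move=> sep x; have [S0 | [i0 i0S]] := set_0Vmem S.
  exists (fun _ => 0) => l; rewrite S0 big_set0.
  by apply: sep => i; rewrite S0 inE.
pose h := enum_rank_in i0S.
pose V : 'M[R]_(#|S|, n) := \matrix_(k, l) u (enum_val k) l.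
have /row_fullP [B BV] : row_full V.
  suff : row_free V^T by rewrite /row_free mxrank_tr.
  apply: inj_row_free => w wV; apply/rowP => l; rewrite [RHS]mxE.
  apply: (sep (fun l => w 0 l)) => i iS.
  transitivity ((w *m V^T) 0 (h i)); last by rewrite wV mxE.
  by rewrite mxE; apply: eq_bigr => l' _; rewrite !mxE (enum_rankK_in i0S iS).
exists (fun i => (\row_l x l *m B) 0 (h i)) => l.
transitivity ((\row_l x l *m B *m V) 0 l); first by rewrite -mulmxA BV mulmx1 mxE.
rewrite mxE (big_enum_rank i0S); apply: eq_bigr => i iS.
by rewrite [V _ _]mxE (enum_rankK_in i0S iS).
Qed.

End DualFamilies.

Section NonnegLeftInverse.
Variables (R : numDomainType) (k r : nat).
Variables (a : 'I_r -> 'I_k -> R) (b : 'I_k -> 'I_r -> R).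
Hypotheses (a_ge0 : forall i l, 0 <= a i l) (b_ge0 : forall l i, 0 <= b l i).
Hypothesis ba1 : forall l l', \sum_i b l i * a i l' = (l == l')%:R.

Lemma nonneg_left_inverse_monomial :
  exists2 p : 'I_k -> 'I_r, injective p &
    forall l, 0 < a (p l) l /\ forall l', l' != l -> a (p l) l' = 0.
Proof.
have ba_ge0 l l' i : 0 <= b l i * a i l' by rewrite mulr_ge0.
have /fin_all_exists [p bap] l : exists i, 0 < b l i * a i l.
  have : \sum_i b l i * a i l != 0 by rewrite ba1 eqxx oner_neq0.
  by rewrite psumr_neq0 => [/hasP [i _ /andP [_ ?]] | i _]; [exists i | exact: ba_ge0].
have ba_neq0 l : (b l (p l) != 0) && (a (p l) l != 0).
  by move: (bap l); rewrite lt0r mulf_eq0 negb_or => /andP[].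
have b_neq0 l : b l (p l) != 0 by case/andP: (ba_neq0 l).
have a_neq0 l : a (p l) l != 0 by case/andP: (ba_neq0 l).
have a_off l l' : l' != l -> a (p l) l' = 0.
  move=> l'l; have sum0 : \sum_i b l i * a i l' = 0 by rewrite ba1 eq_sym (negbTE l'l).
  have /eqP := psumr_eq0P (fun i _ => ba_ge0 l l' i) sum0 (i := p l) isT.
  by rewrite mulf_eq0 (negbTE (b_neq0 l)) => /eqP.
exists p => [l l' pl | l]; last by rewrite lt0r a_neq0 a_ge0; split=> //; exact: a_off.
by apply: contraTeq (a_neq0 l) => ll'; rewrite pl a_off ?eqxx // eq_sym.
Qed.

End NonnegLeftInverse.

Section Toric.
Variables (R : realType) (n r : nat) (v : 'I_r -> 'I_n -> int).

Local Notation vR i l := ((v i l)%:~R : R).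

Definition char_divisor (m : 'I_n -> R) (i : 'I_r) : R := \sum_l m l * vR i l.

Definition prime_divisor (i t : 'I_r) : R := (i == t)%:R.

Definition simplicial_generators k (w : 'I_k -> 'I_r -> R) : Prop :=
  (forall c : 'I_k -> R,
      lin_equiv v (fun i => \sum_j c j * w j i) (fun _ => 0) -> forall j, c j = 0) /\
  (forall x, pseff v x <->
     exists2 c : 'I_k -> R, (forall j, 0 <= c j) &
       lin_equiv v x (fun i => \sum_j c j * w j i)).

(* The classes [D_j], j outside S, are linearly independent (no nonzero
   principal divisor is supported outside S), and for i in S the divisor
   D_i - div(chi^m) is effective and supported outside S. *)
Definition pseff_basis_outside (S : {set 'I_r}) : Prop :=
  (forall m, (forall i, i \in S -> char_divisor m i = 0) ->
     forall i, char_divisor m i = 0) /\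
  (forall i, i \in S -> exists m,
     (forall j, j \in S -> char_divisor m j = (j == i)%:R) /\
     (forall j, j \notin S -> char_divisor m j <= 0)).

Definition nonpos_combination_outside (S : {set 'I_r}) : Prop :=
  forall j, j \notin S -> exists c : 'I_r -> R, (forall i, i \in S -> c i <= 0) /\
    forall l, vR j l = \sum_(i in S) c i * vR i l.

Lemma char_divisor_sum (J : finType) (P : pred J) (c : J -> R) (m : J -> 'I_n -> R) i :
  char_divisor (fun l => \sum_(j | P j) c j * m j l) i =
  \sum_(j | P j) c j * char_divisor (m j) i.
Proof.
rewrite /char_divisor; under eq_bigr do rewrite mulr_suml.
rewrite exchange_big; apply: eq_bigr => j _; rewrite mulr_sumr.
by apply: eq_bigr => l _; rewrite mulrA.
Qed.

Lemma pairing_rays_comb (A : {pred 'I_r}) (c : 'I_r -> R) (m x : 'I_n -> R) :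
  (forall l, x l = \sum_(i in A) c i * vR i l) ->
  \sum_l m l * x l = \sum_(i in A) c i * char_divisor m i.
Proof.
move=> xE; under eq_bigr do rewrite xE mulr_sumr.
rewrite exchange_big; apply: eq_bigr => i _; rewrite /char_divisor mulr_sumr.
by apply: eq_bigr => l _; rewrite mulrCA.
Qed.

Lemma pairing_dual_coord (S : {set 'I_r}) m i (d : 'I_r -> R) (x : 'I_n -> R) :
  (forall j, j \in S -> char_divisor m j = (j == i)%:R) -> i \in S ->
  (forall l, x l = \sum_(j in S) d j * vR j l) -> \sum_l m l * x l = d i.
Proof.
move=> mS iS xE; rewrite (pairing_rays_comb m xE) -(sum_delta d iS).
by apply: eq_bigr => j jS; rewrite mS.
Qed.

Lemma char_divisor_eq0 Delta m : complete_fan R v Delta ->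
  (forall i, char_divisor m i = 0) -> forall l, m l = 0.
Proof.
move=> complete m0 l; have [sigma _ [c [_ mE]]] := complete m.
have msq : \sum_l m l * m l = 0.
  by rewrite (pairing_rays_comb m mE) big1 // => i _; rewrite m0 mulr0.
have sq_ge0 l' : 0 <= m l' * m l' by rewrite -expr2 sqr_ge0.
have /eqP := psumr_eq0P (fun l' _ => sq_ge0 l') msq (i := l) isT.
by rewrite mulf_eq0 orbb => /eqP.
Qed.

Lemma lin_equiv_refl (x : 'I_r -> R) : lin_equiv v x x.
Proof. by exists (fun _ => 0) => i; rewrite subrr big1 // => l _; rewrite mul0r. Qed.

Lemma lin_equiv_sym (x y : 'I_r -> R) : lin_equiv v x y -> lin_equiv v y x.
Proof.
case=> m xy; exists (fun l => - m l) => i.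
by rewrite -opprB xy -sumrN; apply: eq_bigr => l _; rewrite mulNr.
Qed.

Lemma lin_equiv_trans (x y z : 'I_r -> R) :
  lin_equiv v x y -> lin_equiv v y z -> lin_equiv v x z.
Proof.
case=> m1 xy [m2 yz]; exists (fun l => m1 l + m2 l) => i.
have -> : x i - z i = (x i - y i) + (y i - z i) by rewrite addrA subrK.
by rewrite xy yz -big_split; apply: eq_bigr => l _; rewrite mulrDl.
Qed.

Lemma eq_lin_equiv (x x' y y' : 'I_r -> R) :
  x =1 x' -> y =1 y' -> lin_equiv v x y -> lin_equiv v x' y'.
Proof. by move=> xx' yy' [m xy]; exists m => i; rewrite -xx' -yy' xy. Qed.

Lemma lin_equiv_char_divisor m : lin_equiv v (char_divisor m) (fun _ => 0).
Proof. by exists m => i; rewrite subr0. Qed.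

Lemma lin_equiv_sum (J : finType) (c : J -> R) (x y : J -> 'I_r -> R) :
  (forall j, lin_equiv v (x j) (y j)) ->
  lin_equiv v (fun i => \sum_j c j * x j i) (fun i => \sum_j c j * y j i).
Proof.
move=> /fin_all_exists [m xy]; pose M l := \sum_j c j * m j l.
exists M => i; rewrite -/(char_divisor M i) char_divisor_sum -sumrB.
by apply: eq_bigr => j _; rewrite -mulrBr xy.
Qed.

Lemma simplicial_generators_coord k (w : 'I_k -> 'I_r -> R) (c c' : 'I_k -> R) :
  simplicial_generators w ->
  lin_equiv v (fun i => \sum_j c j * w j i) (fun i => \sum_j c' j * w j i) ->
  c =1 c'.
Proof.
move=> [free _] [m cc'] j; apply/eqP; rewrite -subr_eq0; apply/eqP.
apply: (free (fun j => c j - c' j) _ j); exists m => i.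
by rewrite subr0 -cc' -sumrB; apply: eq_bigr => l _; rewrite mulrBl.
Qed.

Lemma simplicial_generators_rescale k (w w' : 'I_k -> 'I_r -> R) (a : 'I_k -> R) :
  (forall l, 0 < a l) -> (forall l, lin_equiv v (w' l) (fun i => a l * w l i)) ->
  simplicial_generators w -> simplicial_generators w'.
Proof.
move=> a_gt0 w'E [free gen].
have combE c : lin_equiv v (fun i => \sum_l c l * w' l i)
                           (fun i => \sum_l (c l * a l) * w l i).
  apply: eq_lin_equiv (lin_equiv_sum c w'E) => // i.
  by apply: eq_bigr => l _; rewrite mulrA.
split=> [c c0 l | x].
  have /eqP := free _ (lin_equiv_trans (lin_equiv_sym (combE c)) c0) l.
  by rewrite mulf_eq0 (gt_eqF (a_gt0 l)) orbF => /eqP.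
apply: iff_trans (gen x) _; split=> -[c c_ge0 xE].
  exists (fun l => c l / a l) => [l|]; first exact: divr_ge0 (c_ge0 l) (ltW (a_gt0 l)).
  apply: lin_equiv_trans xE (lin_equiv_sym _).
  apply: eq_lin_equiv (combE _) => // i; apply: eq_bigr => l _.
  by rewrite divfK ?gt_eqF.
exists (fun l => c l * a l) => [l|]; first exact: mulr_ge0 (c_ge0 l) (ltW (a_gt0 l)).
exact: lin_equiv_trans xE (combE c).
Qed.

Lemma simplicial_generators_prime k (w : 'I_k -> 'I_r -> R) :
  simplicial_generators w ->
  exists2 p : 'I_k -> 'I_r, injective p &
    simplicial_generators (fun l => prime_divisor (p l)).
Proof.
move=> gens; have [_ gen] := gens.
have /fin_all_exists [a aP] i : exists a : 'I_k -> R, (forall l, 0 <= a l) /\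
    lin_equiv v (prime_divisor i) (fun t => \sum_l a l * w l t).
  have [|a a_ge0 aE] := (gen (prime_divisor i)).1; last by exists a.
  by exists (prime_divisor i) => [t|]; [exact: ler0n | exact: lin_equiv_refl].
have /fin_all_exists [b bP] l : exists b : 'I_r -> R, (forall i, 0 <= b i) /\
    lin_equiv v (w l) b.
  have [|b b_ge0 bE] := (gen (w l)).2; last by exists b.
  exists (fun l' => (l' == l)%:R) => [l'|]; first exact: ler0n.
  apply: eq_lin_equiv (lin_equiv_refl (w l)) => // t.
  by under eq_bigr do rewrite mulrC; rewrite sum_delta.
have ba1 l : (fun l' => \sum_i b l i * a i l') =1 (fun l' => (l == l')%:R).
  apply: (simplicial_generators_coord gens).
  have bw : lin_equiv v (b l) (fun t => \sum_l' (l == l')%:R * w l' t).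
    apply: eq_lin_equiv (lin_equiv_sym (bP l).2) => // t.
    by under eq_bigr do rewrite mulrC eq_sym; rewrite sum_delta.
  apply: lin_equiv_trans bw; apply: lin_equiv_sym.
  apply: eq_lin_equiv (lin_equiv_sum (b l) (fun i => (aP i).2)) => t.
    by rewrite sum_delta.
  under eq_bigr do rewrite mulr_sumr; rewrite exchange_big /=.
  by apply: eq_bigr => l' _; rewrite mulr_suml; apply: eq_bigr => i _; rewrite mulrA.
have [p p_inj pP] :=
  nonneg_left_inverse_monomial (fun i => (aP i).1) (fun l => (bP l).1) ba1.
exists p => //; apply: simplicial_generators_rescale (fun l => (pP l).1) _ gens => l.
apply: eq_lin_equiv (aP (p l)).2 => // t.
rewrite (bigD1 l) //= big1 ?addr0 // => l' l'l.
by rewrite (pP l).2 ?mul0r.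
Qed.

Lemma prime_expansion k (p : 'I_k -> 'I_r) (f : 'I_r -> R) : injective p ->
  (forall t, t \notin [set p l | l : 'I_k] -> f t = 0) ->
  f =1 (fun t => \sum_l f (p l) * prime_divisor (p l) t).
Proof.
move=> p_inj f0 t; have [/imsetP [l0 _ ->] | tJ] := boolP (t \in [set p l | l : 'I_k]).
  by under eq_bigr do rewrite /prime_divisor (inj_eq p_inj); rewrite sum_delta.
rewrite f0 // big1 // => l _; rewrite /prime_divisor.
have /negbTE -> : p l != t by apply: contraNneq tJ => <-; rewrite imset_f ?inE.
by rewrite mulr0.
Qed.

Lemma simplicial_prime_pseff_basis k (p : 'I_k -> 'I_r) : injective p ->
  simplicial_generators (fun l => prime_divisor (p l)) ->
  pseff_basis_outside (~: [set p l | l : 'I_k]).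
Proof.
set J := [set p l | l : 'I_k] => p_inj [free gen].
have p_neq t l : t \notin J -> p l != t.
  by move=> tJ; apply: contraNneq tJ => <-; rewrite imset_f ?inE.
split=> [m m0 | i].
  have f0 t : t \notin J -> char_divisor m t = 0 by move=> tJ; apply: m0; rewrite inE.
  have fp l : char_divisor m (p l) = 0.
    apply: (free (fun l => char_divisor m (p l))).
    exact: eq_lin_equiv (prime_expansion p_inj f0) _ (lin_equiv_char_divisor m).
  by move=> t; rewrite (prime_expansion p_inj f0) big1 // => l _; rewrite fp mul0r.
rewrite inE => iJ; have [|c c_ge0 [m cE]] := (gen (prime_divisor i)).1.
  by exists (prime_divisor i) => [t|]; [exact: ler0n | exact: lin_equiv_refl].
exists m; split=> [t | t]; rewrite ?inE => tJ; rewrite /char_divisor -cE.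
  rewrite big1 => [|l _]; first by rewrite subr0 /prime_divisor eq_sym.
  by rewrite /prime_divisor (negbTE (p_neq t l tJ)) mulr0.
move: tJ; rewrite negbK => /imsetP [l0 _ ->].
under eq_bigr do rewrite /prime_divisor (inj_eq p_inj).
rewrite sum_delta // /prime_divisor eq_sym (negbTE (p_neq i l0 iJ)).
by rewrite sub0r oppr_le0 c_ge0.
Qed.

Lemma pseff_basis_simplicial_prime k (p : 'I_k -> 'I_r) : injective p ->
  pseff_basis_outside (~: [set p l | l : 'I_k]) ->
  simplicial_generators (fun l => prime_divisor (p l)).
Proof.
set S := ~: [set p l | l : 'I_k] => p_inj [indep eff].
have p_notin l : p l \notin S by rewrite inE negbK imset_f ?inE.
have p_neq t l : t \in S -> p l != t by move=> tS; apply: contraTneq tS => <-.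
split=> [c [m cE] l | x].
  have m0 t : char_divisor m t = 0.
    apply: indep t => t tS; rewrite /char_divisor -cE subr0 big1 // => l' _.
    by rewrite /prime_divisor (negbTE (p_neq t l' tS)) mulr0.
  move: (cE (p l)); rewrite subr0 -/(char_divisor m (p l)) m0.
  by under eq_bigr do rewrite /prime_divisor (inj_eq p_inj); rewrite sum_delta.
split=> [[c0 c0_ge0 xc0] | [c c_ge0 xc]]; last first.
  exists (fun t => \sum_l c l * prime_divisor (p l) t) => // t.
  by apply: sumr_ge0 => l _; rewrite mulr_ge0 ?ler0n.
have /fin_all_exists [M MP] i : exists m, i \in S ->
    (forall j, j \in S -> char_divisor m j = (j == i)%:R) /\
    (forall j, j \notin S -> char_divisor m j <= 0).
  have [iS | _] := boolP (i \in S); last by exists (fun _ => 0).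
  by have [m] := eff i iS; exists m.
pose y t := c0 t - char_divisor (fun l => \sum_(i in S) c0 i * M i l) t.
have yS t : t \in S -> y t = 0.
  move=> tS; rewrite /y char_divisor_sum -{1}(sum_delta c0 tS) -sumrB big1 // => i iS.
  by rewrite (MP i iS).1 // eq_sym subrr.
have y_ge0 t : t \notin S -> 0 <= y t.
  move=> tS; rewrite /y char_divisor_sum subr_ge0; apply: le_trans (c0_ge0 t).
  by apply: sumr_le0 => i iS; rewrite mulr_ge0_le0 // (MP i iS).2.
exists (fun l => y (p l)) => [l | ]; first exact: y_ge0.
apply: lin_equiv_trans xc0 _.
apply: eq_lin_equiv (prime_expansion p_inj (f := y) _) _ => //.
  by move=> t tJ; apply: yS; rewrite inE.
by exists (fun l => \sum_(i in S) c0 i * M i l) => t; rewrite /y opprB addrC subrK.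
Qed.

Lemma cone_pseff_basis Delta S : is_fan R v Delta -> S \in Delta ->
  nonpos_combination_outside S -> pseff_basis_outside S.
Proof.
case=> _ _ _ free _ SD neg; split=> [m m0 t | i iS].
  have [tS | tS] := boolP (t \in S); first exact: m0.
  have [c [_ cE]] := neg t tS.
  by rewrite /char_divisor (pairing_rays_comb m cE) big1 // => i iS; rewrite m0 ?mulr0.
have [m mS] := dual_functional (u := fun i l => vR i l) (free S SD) iS.
exists m; split=> [j jS | j jS]; first exact: mS.
have [c [c_le0 cE]] := neg j jS.
by rewrite /char_divisor (pairing_dual_coord mS iS cE) c_le0.
Qed.

Lemma pseff_basis_span Delta S : complete_fan R v Delta -> pseff_basis_outside S ->
  forall x : 'I_n -> R, exists d : 'I_r -> R,
    forall l, x l = \sum_(i in S) d i * vR i l.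
Proof.
move=> complete [indep _]; apply: (separating_span (u := fun i l => vR i l)) => m m0.
exact: char_divisor_eq0 complete (indep m m0).
Qed.

Lemma pseff_basis_cone Delta S : is_fan R v Delta -> complete_fan R v Delta ->
  pseff_basis_outside S -> S \in Delta.
Proof.
case=> _ _ face _ _ complete [_ eff].
pose x l := \sum_(i in S) 1 * vR i l.
have [tau tauD [c [c_ge0 xE]]] := complete x.
apply: (face tau) => //; apply/subsetP => i iS; apply: contraT => itau.
have [m [mS m_le0]] := eff i iS.
have : \sum_l m l * x l <= 0.
  rewrite (pairing_rays_comb m xE); apply: sumr_le0 => t ttau.
  have [tS | tS] := boolP (t \in S); last by rewrite mulr_ge0_le0 ?m_le0.
  rewrite mS // (_ : t == i = false) ?mulr0 //.
  by apply: contraNF itau => /eqP <-.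
by rewrite (pairing_dual_coord (d := fun _ => 1) mS iS) // ler10.
Qed.

Lemma pseff_basis_maximal Delta S : is_fan R v Delta -> complete_fan R v Delta ->
  pseff_basis_outside S -> maximal_cone Delta S.
Proof.
move=> fan complete basis; split; first exact: pseff_basis_cone basis.
case: fan => _ _ _ free _ tau tauD Stau; apply/eqP; rewrite eqEsubset Stau andbT.
apply/subsetP => j jtau; apply: contraT => jS.
have [d dE] := pseff_basis_span complete basis (fun l => vR j l).
(* v_j - sum_(i in S) d_i v_i = 0 is a nontrivial relation among the rays of tau. *)
pose c i := if i \in S then d i else - (i == j)%:R.
suff : c j = 0 by rewrite /c (negbTE jS) eqxx => /eqP; rewrite oppr_eq0 oner_eq0.
apply: (free tau tauD c _ j jtau) => l.
rewrite (big_setID S) /= (setIidPr Stau).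
have -> : \sum_(i in S) c i * vR i l = vR j l.
  by rewrite dE; apply: eq_bigr => i iS; rewrite /c iS.
have -> : \sum_(i in tau :\: S) c i * vR i l =
          - \sum_(i in tau :\: S) vR i l * (i == j)%:R.
  rewrite -sumrN; apply: eq_bigr => i; rewrite inE => /andP [/negbTE iS _].
  by rewrite /c iS mulNr mulrC.
by rewrite sum_delta ?inE ?jS // addrN.
Qed.

Lemma pseff_basis_nonpos Delta S : complete_fan R v Delta ->
  pseff_basis_outside S -> nonpos_combination_outside S.
Proof.
move=> complete basis j jS.
have [d dE] := pseff_basis_span complete basis (fun l => vR j l).
exists d; split=> // i iS; have [m [mS m_le0]] := basis.2 i iS.
by rewrite -(pairing_dual_coord mS iS dE); exact: m_le0.
Qed.

End Toric.

Unset Implicit Arguments.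

Theorem lemma6p2 (R : realType) (n r : nat) (v : 'I_r -> 'I_n -> int)
    (Delta : {set {set 'I_r}})
    (Hfan : is_fan R v Delta) (Hsmooth : smooth_fan v Delta)
    (Hcomplete : complete_fan R v Delta) (Hproj : projective_fan R v Delta) :
  pseff_simplicial R v <->
  exists sigma0 : {set 'I_r}, maximal_cone Delta sigma0 /\
    forall j, j \notin sigma0 ->
      exists c : 'I_r -> R, (forall i, i \in sigma0 -> c i <= 0) /\
        forall l, ((v j l)%:~R : R) = \sum_(i in sigma0) c i * (v i l)%:~R.
Proof.
split=> [[k [w gens]] | [S [[SD _] neg]]].
  have [p p_inj /(simplicial_prime_pseff_basis p_inj) basis] :=
    simplicial_generators_prime gens.
  exists (~: [set p l | l : 'I_k]); split.
    exact: pseff_basis_maximal Hfan Hcomplete basis.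
  exact: pseff_basis_nonpos Hcomplete basis.
exists #|~: S|, (fun l => prime_divisor R (enum_val l)).
apply: pseff_basis_simplicial_prime; first exact: enum_val_inj.
by rewrite imset_enum_val setCK; exact: cone_pseff_basis Hfan SD neg.
Qed.
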